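(* Let $n,d\ge 1$, let $\mathbb{D}^n=\{0,1,\dots,d-1\}^n$, and let $W$ be the complex Hilbert space of dimension $d^n$ with orthonormal (standard) basis $\{v_x\}_{x\in\mathbb{D}^n}$. Let $F:\mathbb{D}^n\to\mathbb{R}$ be an objective function and let $H_P$ be the problem Hamiltonian representing $F$, i.e. the linear operator with $H_P(v_x)=F(x)v_x$ for all $x\in\mathbb{D}^n$. Let $K$ be a group acting linearly and unitarily on $W$ such that every element of $K$ commutes with $H_P$ (i.e. $K$ is a group of symmetries of $H_P$, not necessarily all of them), and let $$W=\bigoplus_i W_i,\qquad W_i=V_i^{\oplus m_i},$$ be the decomposition of $W$ into isotypic components, where $V_i$ ranges over the pairwise non-isomorphic irreducible representations of $K$ occurring in $W$ and $m_i$ is the multiplicity of $V_i$. Fix an index $i$ and suppose $H_{M,i}$ is a Hamiltonian on $W$ such that (1) the matrix of $H_{M,i}$ in the standard basis satisfies the hypotheses of the Perron–Frobenius theorem (it is a real matrix with nonnegative entries that is irreducible, i.e. it leaves no proper nonzero coordinate subspace invariant); (2) the lowest-energy eigenspace of $H_{M,i}$ is one-dimensional and contained in $W_i$; and (3) $H_{M,i}$ preserves the decomposition $W=\bigoplus_j W_j$, i.e. $H_{M,i}(W_j)\subseteq W_j$ for all $j$. Let $\xi_i$ be a unit vector spanning the lowest-energy eigenspace of $H_{M,i}$. Then one obtains a reduced QAOA with problem Hamiltonian $H_P$, mixer Hamiltonian $H_{M,i}$ and initial state $\xi_i$ whose ambient Hilbert space is $W_i$: for every $p\ge 1$ and all real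 parameters $\beta_1,\gamma_1,\dots,\beta_p,\gamma_p$, the state $$e^{-i\beta_1 H_{M,i}}e^{-i\gamma_1 H_P}\cdots e^{-i\beta_p H_{M,i}}e^{-i\gamma_p H_P}\,\xi_i$$ lies in $W_i$.
   Context: QAOA (Quantum Approximate Optimization Algorithm) of depth $p$ with problem Hamiltonian $H_P$, mixer Hamiltonian $H_M$ and initial state $\xi$ (a lowest-energy state of $H_M$) prepares the state $e^{-i\beta_1 H_M}e^{-i\gamma_1 H_P}\cdots e^{-i\beta_p H_M}e^{-i\gamma_p H_P}\xi$ for real parameters $\beta_j,\gamma_j$, and then measures in the standard basis. *)

From HB Require Import structures.
From mathcomp Require Import all_boot all_order all_algebra.
From mathcomp Require Import complex.
From mathcomp Require Import all_classical all_reals all_analysis.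
Import Order.TTheory GRing.Theory Num.Theory.
Import numFieldNormedType.Exports.

Set Implicit Arguments.
Unset Strict Implicit.
Unset Printing Implicit Defensive.

Local Open Scope ring_scope.
Local Open Scope complex_scope.

(* A linear operator on W is a square matrix A
     acting on the RIGHT: v |-> v *m A.
   - A subspace of W is represented (as in mxalgebra) by a square matrix
     whose row space is the subspace; "v \in U" is (v <= U)%MS. *)

Section QAOA.
Variable R : realType.
Local Notation C := R[i].

Definition Dn (n d : nat) := {ffun 'I_n -> 'I_d}.
(* dimension of W: #|Dn n d| = d ^ n *)
Definition dimW (n d : nat) := #|Dn n d|.

(* H_P(v_x) = F(x) v_x, where the basis vector of index k : 'I_(dimW n d)
   is v_(enum_val k). *)
Definition HP (n d : nat) (F : Dn n d -> R) : 'M[C]_(dimW n d) :=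
  diag_mx (\row_(k < dimW n d) (F (enum_val k))%:C).

Section Ops.
Variable N : nat.

Definition adjmx m p (A : 'M[C]_(m, p)) : 'M[C]_(p, m) := (map_mx conjc A)^T.
Definition hermitian_mx (A : 'M[C]_N) := adjmx A = A.
Definition unitarymx (A : 'M[C]_N) := A *m adjmx A = 1%:M.
Definition vnorm2 (v : 'rV[C]_N) : C := (v *m adjmx v) 0 0.

Definition mxpow (A : 'M[C]_N) (k : nat) : 'M[C]_N := iter k (mulmx A) 1%:M.
Definition expm (A : 'M[C]_N) : 'M[C]_N :=
  limn (series (fun k => (k`!%:R)^-1 *: mxpow A k)).

Definition evol (t : R) (H : 'M[C]_N) : 'M[C]_N := expm ((- 'i * t%:C) *: H).

(* QAOA state  e^{-i b1 HM} e^{-i g1 HP} ... e^{-i bp HM} e^{-i gp HP} xi,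
   for the list of parameters [:: (b1, g1); ...; (bp, gp)]
   (operators act on the right on row vectors, so the rightmost factor,
   e^{-i gp HP}, is applied first). *)
Definition qaoa_state (Hp Hm : 'M[C]_N) (xi : 'rV[C]_N) (bg : seq (R * R)) :=
  foldr (fun bgj v => v *m evol bgj.2 Hp *m evol bgj.1 Hm) xi bg.

(* --- Groups of unitary operators (a group acting linearly and unitarily on
   W, identified with its image in U(W)) --- *)
Definition unitary_group (K : 'M[C]_N -> Prop) :=
  [/\ K 1%:M,
      (forall g h, K g -> K h -> K (g *m h)),
      (forall g, K g -> K (invmx g)) &
      (forall g, K g -> unitarymx g)].

Definition submod (K : 'M[C]_N -> Prop) (U : 'M[C]_N) :=
  forall g, K g -> (U *m g <= U)%MS.

Definition irr_submod (K : 'M[C]_N -> Prop) (U : 'M[C]_N) :=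
  [/\ submod K U, U != 0 &
      forall V : 'M[C]_N, submod K V -> (V <= U)%MS -> V = 0 \/ (U <= V)%MS].

(* isomorphism of subrepresentations: a linear map f, injective on U,
   mapping U onto V and commuting with the action of K on U *)
Definition submod_iso (K : 'M[C]_N -> Prop) (U V : 'M[C]_N) :=
  exists f : 'M[C]_N,
    [/\ (U *m f == V)%MS, \rank (U *m f) = \rank U &
        forall g, K g -> U *m g *m f = U *m f *m g].

(* The isotypic component of W of type V (V an irreducible subrepresentation):
   the sum of all irreducible subrepresentations isomorphic to V.
   v lies in it iff v lies in a finite sum of such subrepresentations. *)
Definition in_isotypic (K : 'M[C]_N -> Prop) (V : 'M[C]_N) (v : 'rV[C]_N) :=
  exists (k : nat) (Us : 'I_k -> 'M[C]_N),
    (forall j, irr_submod K (Us j) /\ submod_iso K (Us j) V) /\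
    (v <= \sum_(j < k) Us j)%MS.

Definition coord_subspace (A : {set 'I_N}) : 'M[C]_N :=
  \matrix_(i, j) (if (i == j) && (i \in A) then 1 else 0).

Definition perron_frobenius_hyp (H : 'M[C]_N) :=
  (forall i j, 0 <= H i j) /\
  (forall A : {set 'I_N}, (0 < #|A|)%N -> (#|A| < N)%N ->
     ~ (coord_subspace A *m H <= coord_subspace A)%MS).

Definition lowest_eigenvalue (H : 'M[C]_N) (e : C) :=
  eigenvalue H e /\ forall mu, eigenvalue H mu -> e <= mu.

End Ops.
End QAOA.

(* The isotypic component W_i is the sum of all irreducible subrepresentations
   of K isomorphic to V_i; by finite dimensionality it is the row space of one
   finite such sum.  It is invariant under H_P because an operator commuting
   with K sends an irreducible subrepresentation isomorphic to V_i either to 0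
   or onto another one (Schur's argument), and it is invariant under H_{M,i} by
   hypothesis (3).  A subspace invariant under H is invariant under the partial
   sums of the exponential series of -itH, hence, being closed, under e^{-itH}.
   So every layer of the circuit maps W_i into itself, and xi_i lies in W_i by
   hypothesis (2).  Nothing else is used: neither the group structure of K,
   nor the Perron-Frobenius property, the one-dimensionality of the lowest
   eigenspace or the normalisation of xi_i. *)

From HB Require Import structures.
From mathcomp Require Import all_boot all_order all_algebra.
From mathcomp Require Import complex.
From mathcomp Require Import all_classical all_reals all_analysis.
Import Order.TTheory GRing.Theory Num.Theory.
Import numFieldNormedType.Exports.
Set Implicit Arguments.
Unset Strict Implicit.
Unset Printing Implicit Defensive.

Local Open Scope ring_scope.
Local Open Scope complex_scope.
Local Open Scope classical_set_scope.

Section MatrixFacts.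
Variables (F : fieldType) (N : nat).

Lemma stablemx_rows (S A : 'M[F]_N) :
  (forall v : 'rV_N, (v <= S)%MS -> (v *m A <= S)%MS) -> stablemx S A.
Proof. by move=> SA; apply/row_subP => i; rewrite row_mul SA ?row_sub. Qed.

Lemma cap_kermx0_linv (U A : 'M[F]_N) : (U :&: kermx A)%MS = 0 ->
  exists B : 'M[F]_N, forall m (X : 'M[F]_(m, N)), (X <= U)%MS -> X *m A *m B = X.
Proof.
move=> UkerA0; exists (pinvmx (U *m A) *m U) => m X XU.
apply/eqP; rewrite -subr_eq0 -submx0 -UkerA0 sub_capmx; apply/andP; split.
  by rewrite addmx_sub ?eqmx_opp // mulmxA submxMl.
apply/sub_kermxP; rewrite mulmxBl.
have -> : X *m A *m (pinvmx (U *m A) *m U) *m A =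
    X *m A *m pinvmx (U *m A) *m (U *m A) by rewrite !mulmxA.
by rewrite mulmxKpV ?subrr ?submxMr.
Qed.

Lemma mxrank_mul_cap_kermx0 (U A : 'M[F]_N) : (U :&: kermx A)%MS = 0 ->
  \rank (U *m A) = \rank U.
Proof. by move=> UkerA0; rewrite -(mxrank_mul_ker U A) UkerA0 mxrank0 addn0. Qed.

End MatrixFacts.

Section Representations.
Variables (R : realType) (N : nat) (K : 'M[R[i]]_N -> Prop).
Implicit Types (U V A : 'M[R[i]]_N).

Definition equivariant A := forall g, K g -> g *m A = A *m g.

Lemma submod_capmx U V : submod K U -> submod K V -> submod K (U :&: V)%MS.
Proof.
move=> sU sV g Kg; rewrite sub_capmx.
by rewrite (submx_trans (submxMr _ (capmxSl _ _)) (sU g Kg))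
           (submx_trans (submxMr _ (capmxSr _ _)) (sV g Kg)).
Qed.

Lemma submod_mul U A : submod K U -> equivariant A -> submod K (U *m A).
Proof. by move=> sU eqA g Kg; rewrite -mulmxA -eqA // mulmxA submxMr ?sU. Qed.

Lemma submod_kermx A : equivariant A -> submod K (kermx A).
Proof. by move=> eqA g Kg; apply: comm_mx_stable_ker; rewrite /comm_mx eqA. Qed.

Lemma submod_preimage A V : equivariant A -> submod K V ->
  submod K (kermx (A *m cokermx V)).
Proof.
move=> eqA sV g Kg; rewrite sub_kermx mulmxA -(mulmxA _ g) eqA // mulmxA -submxE.
apply: submx_trans (sV g Kg); apply: submxMr.
by rewrite submxE -mulmxA mulmx_ker.
Qed.

Lemma irr_submod_mul U A : irr_submod K U -> equivariant A -> U *m A != 0 ->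
  irr_submod K (U *m A).
Proof.
case=> sU _ irrU eqA UA0; split => [||V sV VUA]; [exact: submod_mul | by [] |].
set P := (U :&: kermx (A *m cokermx V))%MS.
have sP : submod K P by apply: submod_capmx => //; exact: submod_preimage.
case: (irrU P sP (capmxSl _ _)) => [P0 | UP]; last first.
  right; rewrite submxE -mulmxA -sub_kermx.
  exact: submx_trans UP (capmxSr _ _).
left; case/submxP: VUA => D defV.
suff : (D *m U <= P)%MS by rewrite P0 submx0 defV mulmxA => /eqP ->; rewrite mul0mx.
rewrite sub_capmx submxMl sub_kermx /=.
by rewrite mulmxA -(mulmxA D) -defV mulmx_coker.
Qed.

Lemma submod_iso_mul U V A : submod K U -> submod_iso K U V -> equivariant A ->
  (U :&: kermx A)%MS = 0 -> submod_iso K (U *m A) V.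
Proof.
move=> sU [f [UfV rkUf eqf]] eqA UkerA0.
have [B AB] := cap_kermx0_linv UkerA0.
exists (B *m f); split.
- by rewrite mulmxA AB.
- by rewrite mulmxA AB // rkUf mxrank_mul_cap_kermx0.
- move=> g Kg; rewrite -(mulmxA U A) -eqA // !mulmxA.
  by rewrite (AB _ (U *m g)) ?sU // AB // eqf.
Qed.

Lemma irr_iso_mul U V A : irr_submod K U -> submod_iso K U V -> equivariant A ->
  U *m A = 0 \/ irr_submod K (U *m A) /\ submod_iso K (U *m A) V.
Proof.
move=> irrU isoUV eqA; have [sU U0 minU] := irrU.
have sKer : submod K (U :&: kermx A)%MS.
  by apply: submod_capmx => //; exact: submod_kermx.
case: (minU _ sKer (capmxSl _ _)) => [UkerA0 | UkerA]; last first.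
  by left; apply/sub_kermxP; exact: submx_trans UkerA (capmxSr _ _).
right; split; last exact: submod_iso_mul.
by apply: irr_submod_mul; rewrite // -mxrank_eq0 mxrank_mul_cap_kermx0 ?mxrank_eq0.
Qed.

Definition isotypic_family V k (Us : 'I_k -> 'M[R[i]]_N) :=
  forall j, irr_submod K (Us j) /\ submod_iso K (Us j) V.

Lemma isotypic_family_cat V k k' (Us : 'I_k -> 'M[R[i]]_N) (Us' : 'I_k' -> 'M[R[i]]_N) :
  isotypic_family V Us -> isotypic_family V Us' ->
  exists Ws : 'I_(k + k') -> 'M[R[i]]_N, isotypic_family V Ws /\
    (\sum_j Ws j = \sum_j Us j + \sum_j Us' j)%MS.
Proof.
move=> famUs famUs'.
exists (fun j => match fintype.split j with inl a => Us a | inr b => Us' b end); split.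
  by move=> j; case: fintype.split.
rewrite big_split_ord /=; congr (_ + _)%MS; apply: eq_bigr => j _.
  by rewrite (unsplitK (inl j : 'I_k + 'I_k')).
by rewrite (unsplitK (inr j : 'I_k + 'I_k')).
Qed.

Lemma isotypic_componentP V : exists k (Us : 'I_k -> 'M[R[i]]_N),
  isotypic_family V Us /\ forall v, in_isotypic K V v <-> (v <= \sum_j Us j)%MS.
Proof.
pose P (r : nat) := `[< exists k (Us : 'I_k -> 'M[R[i]]_N),
                 isotypic_family V Us /\ \rank (\sum_j Us j)%MS = r >].
have P0 : exists r, P r.
  exists 0%N; apply/asboolP; exists 0%N, (fun=> 0); split; first by case.
  by rewrite big_ord0 mxrank0.
have Pub r : P r -> (r <= N)%N by case/asboolP => k [Us [_ <-]]; exact: rank_leq_col.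
have [r /asboolP [k [Us [famUs rkS]]] maxr] := ex_maxnP P0 Pub.
exists k, Us; split => // v; split; last by exists k, Us.
case=> k' [Us' [famUs' vS']]; apply: submx_trans vS' _.
have [Ws [famWs sumWs]] := isotypic_family_cat famUs famUs'.
have rkWs : (\rank (\sum_j Ws j)%MS <= r)%N.
  by apply: maxr; apply/asboolP; exists _, Ws.
have sumUsWs : (\sum_j Us j <= \sum_j Ws j)%MS by rewrite sumWs addsmxSl.
apply: submx_trans (_ : _ <= \sum_j Ws j)%MS _; first by rewrite sumWs addsmxSr.
have /mxrank_leqif_sup [_ <-] := sumUsWs.
by rewrite eqn_leq mxrankS // rkS rkWs.
Qed.

Lemma in_isotypic_mul V A v : equivariant A ->
  in_isotypic K V v -> in_isotypic K V (v *m A).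
Proof.
have [k [Us [famUs charS]]] := isotypic_componentP V.
move=> eqA /charS vS; apply/charS; apply: submx_trans (submxMr A vS) _.
rewrite sumsmxMr; apply/sumsmx_subP => j _.
have [-> | [irrUA isoUA]] := irr_iso_mul (famUs j).1 (famUs j).2 eqA.
  exact: sub0mx.
apply/row_subP => r; apply/charS; exists 1, (fun=> Us j *m A).
by rewrite big_ord1 row_sub.
Qed.

End Representations.

Section Exponential.
Variables (R : realType) (N : nat).
Local Notation C := R[i].
(* Matrices over [R[i]] get their normed topology only through the
   numFieldType structure of [R[i]]. *)
Local Notation Ctop := (R[i] : numFieldType).
Implicit Types (S A X : 'M[C]_N).

Lemma continuous_mulmx_coord (A B : 'M[C]_N) r s :
  continuous (fun X : 'M[Ctop]_N => (A *m X *m B) r s : Ctop).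
Proof.
have -> : (fun X : 'M[Ctop]_N => (A *m X *m B) r s : Ctop) =
    (fun X => \sum_b \sum_a A r a * B b s * X a b).
  apply/funext => X; rewrite !mxE; apply: eq_bigr => b _.
  by rewrite !mxE mulr_suml; apply: eq_bigr => a _; rewrite mulrAC.
move=> X; apply: (continuous_big add_continuous) => b _ {}X.
apply: (continuous_big add_continuous) => a _ {}X.
exact: continuous_comp (@coord_continuous Ctop N N a b X) (@mulrl_continuous Ctop _ _).
Qed.

Lemma closed_stablemx S : closed [set X : 'M[Ctop]_N | stablemx S X].
Proof.
have -> : [set X : 'M[Ctop]_N | stablemx S X] =
    \bigcap_(rs in setT)
      [set X : 'M[Ctop]_N | (S *m X *m cokermx S) rs.1 rs.2 = 0].
  apply/seteqP; split => X /=.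
    by rewrite submxE => /eqP SX0 rs _; rewrite /= SX0 mxE.
  move=> SX0; rewrite submxE; apply/eqP/matrixP => r s.
  by rewrite (SX0 (r, s)) ?mxE.
apply: closed_bigI => rs _.
have closed0 : closed [set (0 : Ctop)].
  exact/accessible_closed_set1/hausdorff_accessible/norm_hausdorff.
have cont := @continuous_mulmx_coord S (cokermx S) rs.1 rs.2.
exact: (continuous_closedP _).1 cont _ closed0.
Qed.

Lemma stablemx_mxpow S A k : stablemx S A -> stablemx S (mxpow A k).
Proof. by move=> SA; elim: k => [|k IHk]; [exact: stablemxC | exact: stablemxM]. Qed.

Lemma stablemx_expm S A : stablemx S A -> stablemx S (expm A).
Proof.
move=> SA; rewrite /expm /lim /lim_in.
case: xgetP => [L _ cvgL | _]; last first.
  (* the series diverges and [limn] returns the default point *)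
  have -> : point = 0 :> 'M[Ctop]_N by apply/matrixP => i j; rewrite !mxE.
  exact: stablemx0.
apply: (closed_cvg _ (@closed_stablemx S) _ _ cvgL).
apply: nearW => m /=; rewrite seriesEord mulmx_sumr; apply: summx_sub => k _.
by rewrite -scalemxAr scalemx_sub // stablemx_mxpow.
Qed.

Lemma stablemx_evol S A t : stablemx S A -> stablemx S (evol t A).
Proof. by move=> SA; rewrite stablemx_expm // -scalemxAr scalemx_sub. Qed.

Lemma qaoa_state_sub S Hp Hm xi bg :
  stablemx S Hp -> stablemx S Hm -> (xi <= S)%MS ->
  (qaoa_state Hp Hm xi bg <= S)%MS.
Proof.
move=> SHp SHm xiS; have evolS (v : 'rV[C]_N) H t :
    (v <= S)%MS -> stablemx S H -> (v *m evol t H <= S)%MS.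
  by move=> vS SH; apply: submx_trans (submxMr _ vS) _; exact: stablemx_evol.
by elim: bg => [|[b g] bg IHbg] //=; rewrite !evolS.
Qed.

End Exponential.

Theorem mainTheorem1 (R : realType) (n d : nat) (hn : (1 <= n)%N) (hd : (1 <= d)%N)
  (F : Dn n d -> R)
  (K : 'M[R[i]]_(dimW n d) -> Prop)
  (HK : unitary_group K)
  (HKcomm : forall g, K g -> g *m HP F = HP F *m g)
  (Vi : 'M[R[i]]_(dimW n d)) (HVi : irr_submod K Vi)
  (HM : 'M[R[i]]_(dimW n d))
  (HMherm : hermitian_mx HM)
  (HM1 : perron_frobenius_hyp HM)
  (e : R[i]) (He : lowest_eigenvalue HM e)
  (HM2dim : \rank (eigenspace HM e) = 1%N)
  (HM2sub : forall v : 'rV[R[i]]_(dimW n d),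
      (v <= eigenspace HM e)%MS -> in_isotypic K Vi v)
  (HM3 : forall Vj : 'M[R[i]]_(dimW n d), irr_submod K Vj ->
      forall w, in_isotypic K Vj w -> in_isotypic K Vj (w *m HM))
  (xi : 'rV[R[i]]_(dimW n d))
  (Hxi : (xi <= eigenspace HM e)%MS) (Hxi1 : vnorm2 xi = 1) :
  forall (p : nat), (1 <= p)%N ->
  forall beta gamma : 'I_p -> R,
    in_isotypic K Vi
      (qaoa_state (HP F) HM xi [seq (beta j, gamma j) | j <- enum 'I_p]).
Proof.
move=> p _ beta gamma.
have [k [Us [_ charS]]] := isotypic_componentP K Vi.
have stableS A : (forall v, in_isotypic K Vi v -> in_isotypic K Vi (v *m A)) ->
    stablemx (\sum_j Us j)%MS A.
  by move=> VA; apply: stablemx_rows => v /charS /VA /charS.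
apply/charS; apply: qaoa_state_sub.
- by apply: stableS => v; exact: in_isotypic_mul HKcomm.
- exact/stableS/HM3.
- exact/charS/HM2sub.
Qed.
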